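(* Let $k\ge2$, $p\in[0,1]$, and consider the random complex $Y^k(n,p)$. For every $(k-2)$-face $H\in\binom{[n]}{k-1}$, the random graph $\mathrm{lk}(H,Y^k(n,p))$ (on vertex set $[n]\setminus H$) has the distribution of the binomial random graph $G(n-k+1,p/2)$.
   Context: $Y^k(n,p)$ is the random $k$-dimensional complex on vertex set $[n]$ with complete $(k-1)$-skeleton (all subsets of size at most $k$ are faces) constructed as follows: choose $a:\binom{[n]}{k}\to\mathbb Z_2$ with the values $a(F)$ independent and uniform; call $H\in\binom{[n]}{k+1}$ good if $H$ contains an even number of $k$-subsets $F$ with $a(F)=1$; each good $H$ is added as a $k$-face independently with probability $p$. The link $\mathrm{lk}(H,Y)$ of $H\in\binom{[n]}{k-1}$ is the graph on $[n]\setminus H$ with edges $e$ such that $H\cup e$ is a $k$-face. $G(m,q)$ is the random graph on $m$ vertices with each edge present independently with probability $q$. *)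

From HB Require Import structures.
From mathcomp Require Import all_boot all_order all_algebra.
Set Implicit Arguments. Unset Strict Implicit. Unset Printing Implicit Defensive.
Import Order.TTheory GRing.Theory Num.Theory.
Local Open Scope ring_scope.

(* A labelling a : binom([n],k) -> Z_2 is encoded as a boolean function on all
   subsets; only its values on k-sets matter.  We draw a uniformly among all
   functions {set 'I_n} -> bool, so its values on the k-sets are independent
   and uniform (the extra coordinates are irrelevant independent noise). *)
Definition labelling (n : nat) := {ffun {set 'I_n} -> bool}.

Definition label_weight (R : numFieldType) (n : nat) (a : labelling n) : R :=
  1 / (#|{: labelling n}|)%:R.

Definition good (n k : nat) (a : labelling n) (H : {set 'I_n}) : bool :=
  (#|H| == k.+1) &&
  ~~ odd #|[set F in powerset H | (#|F| == k) && a F]|.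

Definition good_set (n k : nat) (a : labelling n) : {set {set 'I_n}} :=
  [set H | good k a H].

Definition faces_weight (R : numFieldType) (n k : nat) (p : R)
    (a : labelling n) (S : {set {set 'I_n}}) : R :=
  if S \subset good_set k a
  then p ^+ #|S| * (1 - p) ^+ (#|good_set k a| - #|S|)
  else 0.

Definition link (n : nat) (S : {set {set 'I_n}}) (H : {set 'I_n})
    : {set {set 'I_n}} :=
  [set e : {set 'I_n} | [&& #|e| == 2, [disjoint e & H] & (H :|: e) \in S]].

Definition prob_link_eq (R : numFieldType) (n k : nat) (p : R)
    (H : {set 'I_n}) (g : {set {set 'I_n}}) : R :=
  \sum_(a : labelling n) label_weight R a *
    \sum_(S : {set {set 'I_n}}) faces_weight k p a S * (link S H == g)%:R.

Definition complete_edges (n : nat) (V : {set 'I_n}) : {set {set 'I_n}} :=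
  [set e : {set 'I_n} | (#|e| == 2) && (e \subset V)].

Definition gnp_prob (R : numFieldType) (n : nat) (V : {set 'I_n}) (q : R)
    (g : {set {set 'I_n}}) : R :=
  if g \subset complete_edges V
  then q ^+ #|g| * (1 - q) ^+ (#|complete_edges V| - #|g|)
  else 0.

From HB Require Import structures.
From mathcomp Require Import all_boot all_order all_algebra.
From mathcomp Require Import zify ring.
Import Order.TTheory GRing.Theory Num.Theory.
Local Open Scope ring_scope.
Set Implicit Arguments. Unset Strict Implicit.

(* Fix a (k-2)-subset H0 of H.  For an edge e outside H, the k-set H0 :|: e
   lies in H :|: e, and no other k-subset of H :|: e has the form H0 :|: e'.
   Hence flipping a (H0 :|: e) by the parity of the labels of the other
   k-subsets of H :|: e, simultaneously for all e, is an involution of the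
   labellings, after which H :|: e is good exactly when a (H0 :|: e) = 0.
   So the goodness of the sets H :|: e are independent fair coins, and given
   them every good H :|: e is a face independently with probability p: each
   edge of the link is present independently with probability p / 2. *)

Section ProductSums.
Variables (R : comNzRingType) (X : finType).

Lemma sum_ffun_prod (F : X -> bool -> R) :
  \sum_(a : {ffun X -> bool}) \prod_x F x (a x) = \prod_x (F x true + F x false).
Proof. by rewrite -bigA_distr_bigA; apply: eq_bigr => x _; rewrite big_bool. Qed.

Lemma sum_set_prod (F : X -> bool -> R) :
  \sum_(S : {set X}) \prod_x F x (x \in S) = \prod_x (F x true + F x false).
Proof.
rewrite -sum_ffun_prod (reindex (fun f : {ffun X -> bool} => FinSet f)) /=.
  apply: eq_bigr => a _; apply: eq_bigr => x _.
  by rewrite unfold_in /= unlock.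
by exists (@finfun_of_set X) => [f|[f]].
Qed.

Lemma sum_ffun_prod_inj (I : finType) (E : {set I}) (c : I -> X) (F : I -> bool -> R) :
  {in E &, injective c} ->
  \sum_(a : {ffun X -> bool}) \prod_(i in E) F i (a (c i)) =
  \prod_(i in E) (F i true + F i false) * 2%:R ^+ (#|X| - #|E|).
Proof.
move=> c_inj.
pose G x b := if [pick i in E | c i == x] is Some i then F i b else 1.
have G_c i : i \in E -> G (c i) = F i.
  rewrite /G => iE; case: pickP => [j /andP[jE /eqP/c_inj-> //]|/(_ i)].
  by rewrite iE eqxx.
have G_out x : x \notin c @: E -> G x =1 fun=> 1.
  rewrite /G => xE b; case: pickP => [i /andP[iE /eqP ci]|//].
  by rewrite -ci imset_f in xE.
have prod_G (a : {ffun X -> bool}) : \prod_(i in E) F i (a (c i)) = \prod_x G x (a x).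
  rewrite (bigID (mem (c @: E))) /= [X in _ = _ * X]big1 ?mulr1; last first.
    by move=> x /G_out->.
  by rewrite big_imset //=; apply: eq_bigr => i /G_c->.
rewrite (eq_bigr _ (fun a _ => prod_G a)).
rewrite sum_ffun_prod (bigID (mem (c @: E))) /= big_imset //=.
congr (_ * _); first by apply: eq_bigr => i /G_c->.
rewrite (eq_bigr (fun=> 2%:R)) => [|x /G_out Gx]; last by rewrite !Gx.
rewrite prodr_const; congr (_ ^+ _).
by rewrite -(card_in_imset c_inj) -(cardC (mem (c @: E))) addKn.
Qed.

Lemma prod_mem_cond (E g : {set X}) (x y : R) : g \subset E ->
  \prod_(e in E) (if e \in g then x else y) = x ^+ #|g| * y ^+ (#|E| - #|g|).
Proof.
move=> sgE; rewrite (big_setID g) /= (setIidPr sgE).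
rewrite (eq_bigr (fun=> x)) => [|e ->//].
rewrite [X in _ * X](eq_bigr (fun=> y)) => [|e /setDP[_ /negbTE->]//].
by rewrite !prodr_const cardsDS.
Qed.

Lemma subset_weight_prod (G S : {set X}) (p : R) :
  (if S \subset G then p ^+ #|S| * (1 - p) ^+ (#|G| - #|S|) else 0) =
  \prod_x (if x \in G then (if x \in S then p else 1 - p) else (x \notin S)%:R).
Proof.
case: ifPn => [sSG|/subsetPn[x xS xG]]; last first.
  by rewrite (bigD1 x) //= (negbTE xG) xS mul0r.
rewrite (bigID (mem G)) /= [X in _ = _ * X]big1 ?mulr1; last first.
  move=> x /negbTE xG; rewrite xG.
  by case: (boolP (x \in S)) => // /(subsetP sSG); rewrite xG.
by rewrite -prod_mem_cond //; apply: eq_bigr => x ->.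
Qed.

Lemma setI_eq_prod (S B C : {set X}) : C \subset B ->
  ((S :&: B == C)%:R : R) =
  \prod_x (if x \in B then ((x \in S) == (x \in C))%:R else 1).
Proof.
move=> sCB; have [<-|neq] := eqVneq.
  by rewrite big1 // => x _; case: ifP => // xB; rewrite inE xB andbT eqxx.
have [x xB xSC] : exists2 x, x \in B & (x \in S) != (x \in C).
  apply/exists_inP; apply: contraNT neq => /exists_inPn SC.
  apply/eqP/setP => x; rewrite inE.
  case: (boolP (x \in B)) => [/SC/negPn/eqP->|xB]; first by rewrite andbT.
  by rewrite andbF; apply/esym/negP => /(subsetP sCB); apply/negP.
by rewrite (bigD1 x) //= xB (negbTE xSC) mul0r.
Qed.

Lemma sum_subset_weight_setI (G B C : {set X}) (p : R) : C \subset B ->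
  \sum_(S : {set X})
     (if S \subset G then p ^+ #|S| * (1 - p) ^+ (#|G| - #|S|) else 0) *
     (S :&: B == C)%:R =
  \prod_(x in B) (if x \in G then (if x \in C then p else 1 - p) else (x \notin C)%:R).
Proof.
move=> sCB.
pose F x b := (if x \in G then (if b then p else 1 - p) else (~~ b)%:R) *
              (if x \in B then (b == (x \in C))%:R else 1).
transitivity (\sum_(S : {set X}) \prod_x F x (x \in S)).
  by apply: eq_bigr => S _; rewrite subset_weight_prod setI_eq_prod // -big_split.
rewrite sum_set_prod /F (bigID (mem B)) /= [X in _ * X]big1 ?mulr1.
  apply: eq_bigr => x ->.
  by case: (x \in G); case: (x \in C); rewrite /= ?mulr1 ?mulr0 ?addr0 ?add0r.
move=> x /negbTE->; rewrite !mulr1.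
by case: (x \in G); rewrite /= ?add0r // addrC subrK.
Qed.

End ProductSums.

Section Edges.
Variables (n : nat) (H : {set 'I_n}).

Local Notation E := (complete_edges (~: H)).

Lemma setUKD_edge (H0 e : {set 'I_n}) : H0 \subset H -> e \subset ~: H ->
  (H0 :|: e) :\: H = e.
Proof.
move=> sH0H seH; rewrite setDUl; have /eqP-> : H0 :\: H == set0 by rewrite setD_eq0.
by rewrite set0U; apply/setDidPl; rewrite disjoints_subset.
Qed.

Lemma setU_complete_edges_inj (H0 : {set 'I_n}) : H0 \subset H ->
  {in E &, injective (setU H0)}.
Proof.
move=> sH0H e e'; rewrite !inE => /andP[_ seH] /andP[_ se'H] ee'.
by rewrite -(setUKD_edge sH0H seH) ee' setUKD_edge.
Qed.

Lemma linkE (S : {set {set 'I_n}}) : link S H = [set e in E | H :|: e \in S].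
Proof. by apply/setP => e; rewrite !inE subsets_disjoint setCK; case: (#|e| == 2). Qed.

Lemma link_sub (S : {set {set 'I_n}}) : link S H \subset E.
Proof. by rewrite linkE; apply/subsetP => e; rewrite inE => /andP[]. Qed.

Lemma imset_link (S : {set {set 'I_n}}) :
  [set H :|: e | e in link S H] = S :&: [set H :|: e | e in E].
Proof.
apply/setP => x; rewrite inE linkE; apply/imsetP/andP => [[e]|[xS /imsetP[e eE xe]]].
  by rewrite inE => /andP[eE eS] ->; rewrite eS imset_f.
by exists e => //; rewrite inE eE -xe.
Qed.

Lemma setD_imset_setU (g : {set {set 'I_n}}) : g \subset E ->
  [set x :\: H | x in [set H :|: e | e in g]] = g.
Proof.
move=> sgE; rewrite -imset_comp -[RHS]imset_id; apply: eq_in_imset => e /(subsetP sgE).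
by rewrite inE => /andP[_ seH] /=; rewrite setUKD_edge.
Qed.

Lemma link_eq (S g : {set {set 'I_n}}) : g \subset E ->
  (link S H == g) = (S :&: [set H :|: e | e in E] == [set H :|: e | e in g]).
Proof.
move=> sgE; rewrite -imset_link; apply/eqP/eqP => [->//|link_g].
by rewrite -(setD_imset_setU (link_sub S)) link_g setD_imset_setU.
Qed.

End Edges.

Definition link_edge_weight (R : comNzRingType) n (p : R) (g : {set {set 'I_n}})
    (e : {set 'I_n}) (good_e : bool) : R :=
  if good_e then (if e \in g then p else 1 - p) else (e \notin g)%:R.

Lemma sum_faces_weight_link (R : numFieldType) n k (p : R) (a : labelling n)
    (H : {set 'I_n}) (g : {set {set 'I_n}}) :
  g \subset complete_edges (~: H) ->
  \sum_(S : {set {set 'I_n}}) faces_weight k p a S * (link S H == g)%:R =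
  \prod_(e in complete_edges (~: H)) link_edge_weight p g e (good k a (H :|: e)).
Proof.
move=> sgE; have inj := setU_complete_edges_inj (subxx H).
under [LHS]eq_bigr => S _ do rewrite link_eq //.
rewrite sum_subset_weight_setI ?imsetS // big_imset //=.
apply: eq_bigr => e eE; rewrite inE.
suff -> : (H :|: e \in [set H :|: e | e in g]) = (e \in g) by [].
apply/imsetP/idP => [[e' e'g /inj->//]|eg]; last by exists e.
exact: (subsetP sgE).
Qed.

Section Flip.
Variables (n k : nat) (H H0 : {set 'I_n}).
Hypotheses (hk : (2 <= k)%N) (hH : #|H| = k.-1).
Hypotheses (sH0H : H0 \subset H) (hH0 : #|H0| = k.-2).

Local Notation E := (complete_edges (~: H)).

Definition other_ksubsets (e : {set 'I_n}) : {set {set 'I_n}} :=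
  [set F in powerset (H :|: e) | #|F| == k] :\ (H0 :|: e).

Definition other_parity (a : labelling n) (e : {set 'I_n}) : bool :=
  odd #|[set F in other_ksubsets e | a F]|.

Lemma good_setU_edge (a : labelling n) (e : {set 'I_n}) : e \in E ->
  good k a (H :|: e) = ~~ (a (H0 :|: e) (+) other_parity a e).
Proof.
rewrite inE => /andP[/eqP ce seH].
have seH0 : e \subset ~: H0 by apply: subset_trans seH _; rewrite setCS.
have cardU A : e \subset ~: A -> #|A :|: e| = (#|A| + #|e|)%N.
  by rewrite cardsU -disjoints_subset disjoint_sym => /disjoint_setI0->; rewrite cards0 subn0.
rewrite /good cardU // hH ce (_ : (k.-1 + 2 = k.+1)%N) ?eqxx /=; last by lia.
set A := [set F in powerset (H :|: e) | (#|F| == k) && a F].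
have cH0e : #|H0 :|: e| = k by rewrite cardU // hH0 ce; lia.
rewrite (cardsD1 (H0 :|: e) A) oddD inE powersetE setSU // cH0e eqxx /=.
suff -> : A :\ (H0 :|: e) = [set F in other_ksubsets e | a F] by rewrite oddb.
apply/setP => F; rewrite !inE.
by case: (F == H0 :|: e); case: (a F); rewrite /= ?andbT ?andbF.
Qed.

Lemma setU_edge_notin_other (e e' : {set 'I_n}) : e \in E -> e' \in E ->
  H0 :|: e' \notin other_ksubsets e.
Proof.
rewrite !inE => /andP[/eqP ce seH] /andP[/eqP ce' se'H].
apply/negP => /and3P[ne' /subsetP sub _]; move: ne'.
suff /eqP-> : e' == e by rewrite eqxx.
rewrite eqEcard ce ce' leqnn andbT; apply/subsetP => x xe'.
have : x \in H :|: e by apply: sub; rewrite inE xe' orbT.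
by rewrite inE => /orP[xH|//]; move: (subsetP se'H x xe'); rewrite inE xH.
Qed.

Definition flip (a : labelling n) : labelling n :=
  [ffun F => a F (+) [exists e in E, (H0 :|: e == F) && other_parity a e]].

Lemma other_parity_flip (a : labelling n) (e : {set 'I_n}) : e \in E ->
  other_parity (flip a) e = other_parity a e.
Proof.
move=> eE; rewrite /other_parity.
suff -> : [set F in other_ksubsets e | flip a F] = [set F in other_ksubsets e | a F] by [].
apply: eq_finset => F.
case: (boolP (F \in other_ksubsets e)) => //= Fe; rewrite ffunE.
case: exists_inP => [[e' e'E /andP[/eqP e'F _]]|]; last by rewrite addbF.
by move: (setU_edge_notin_other eE e'E); rewrite e'F Fe.
Qed.

Lemma flip_setU_edge (a : labelling n) (e : {set 'I_n}) : e \in E ->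
  flip a (H0 :|: e) = a (H0 :|: e) (+) other_parity a e.
Proof.
move=> eE; rewrite ffunE; congr (_ (+) _).
apply/exists_inP/idP => [[e' e'E /andP[/eqP ee' ?]]|?]; last by exists e; rewrite ?eqxx.
by rewrite -(setU_complete_edges_inj sH0H e'E eE ee').
Qed.

Lemma flipK : involutive flip.
Proof.
move=> a; apply/ffunP => F; rewrite [LHS]ffunE.
have -> : [exists e in E, (H0 :|: e == F) && other_parity (flip a) e] =
          [exists e in E, (H0 :|: e == F) && other_parity a e].
  by apply: eq_existsb => e; case: (boolP (e \in E)) => //= eE; rewrite other_parity_flip.
by rewrite ffunE -addbA addbb addbF.
Qed.

Lemma good_flip (a : labelling n) (e : {set 'I_n}) : e \in E ->
  good k (flip a) (H :|: e) = ~~ a (H0 :|: e).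
Proof.
move=> eE; rewrite good_setU_edge // flip_setU_edge // other_parity_flip //.
by rewrite -addbA addbb addbF.
Qed.

End Flip.

Lemma sum_prod_good (R : comNzRingType) n k (H : {set 'I_n})
    (F : {set 'I_n} -> bool -> R) :
  (2 <= k)%N -> #|H| = k.-1 ->
  \sum_(a : labelling n) \prod_(e in complete_edges (~: H)) F e (good k a (H :|: e)) =
  \prod_(e in complete_edges (~: H)) (F e true + F e false) *
    2%:R ^+ (#|{set 'I_n}| - #|complete_edges (~: H)|).
Proof.
move=> hk hH; have [h hH0] : exists h, h \in H by apply/set0Pn; rewrite -card_gt0 hH; lia.
have sH0H : H :\ h \subset H by apply: subD1set.
have cH0 : #|H :\ h| = k.-2 by move: (cardsD1 h H); rewrite hH0 hH; lia.
rewrite (reindex_inj (can_inj (flipK k H (H :\ h)))) /=.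
under eq_bigr => a _ do under eq_bigr => e eE do rewrite (good_flip hk hH sH0H cH0 _ eE).
rewrite (sum_ffun_prod_inj (fun e b => F e (~~ b)) (setU_complete_edges_inj sH0H)).
by congr (_ * _); apply: eq_bigr => e _; rewrite addrC.
Qed.

Lemma link_edge_weight_sum (R : numFieldType) n (p : R) (g : {set {set 'I_n}}) e :
  link_edge_weight p g e true + link_edge_weight p g e false =
  2 * (if e \in g then p / 2 else 1 - p / 2).
Proof.
by rewrite /link_edge_weight; case: (e \in g); rewrite /= ?addr0; field.
Qed.

Theorem lemma5p1 (R : realFieldType) (n k : nat) (p : R)
    (hk : (2 <= k)%N) (hp0 : 0 <= p) (hp1 : p <= 1)
    (H : {set 'I_n}) (hH : #|H| = k.-1)
    (g : {set {set 'I_n}}) :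
  prob_link_eq k p H g = gnp_prob (~: H) (p / 2) g.
Proof.
(* Both sides are polynomials in p. *)
rewrite /prob_link_eq /gnp_prob; set E := complete_edges (~: H).
case: ifPn => [sgE|sgE]; last first.
  apply: big1 => a _; rewrite big1 ?mulr0 // => S _.
  by case: eqP => [link_g|]; rewrite ?mulr0 //; move: sgE; rewrite -link_g link_sub.
under eq_bigr => a _ do rewrite sum_faces_weight_link //.
rewrite /label_weight -big_distrr /= sum_prod_good //.
under eq_bigr do rewrite link_edge_weight_sum.
rewrite big_split /= prodr_const -prod_mem_cond // card_ffun card_bool natrX.
have /subnKC : (#|E| <= #|{set 'I_n}|)%N by apply: max_card.
move: (#|E|) (#|{set 'I_n}| - #|E|)%N (\prod_(e in E) _) => a b P <-.
have two_neq0 : (2 : R) != 0 by rewrite pnatr_eq0.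
by rewrite exprD; field; rewrite !expf_neq0.
Qed.
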